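(* Let $\mathbf{c}\in\mathbb{R}^2$, let $\mathbf{e}_\pm\in\mathbb{R}^2$ be unit vectors with $\mathbf{e}_+\cdot\mathbf{e}_-=\cos(2\theta)$ where $2\theta\in(0,2\pi)$, let $\Gamma_\pm:=\{\mathbf{c}+t\mathbf{e}_\pm:t>0\}$ and $\Gamma:=\overline{\Gamma}_-\cup\overline{\Gamma}_+$. For $p,\tilde p\in\mathscr{C}^\infty_0(\mathbb{R}_+)$ define $\Theta_\Gamma(p,\tilde p)$ on $\Gamma$ by $\Theta_\Gamma(p,\tilde p)(\mathbf{c}+t\mathbf{e}_\pm):=(p(t)\pm\tilde p(t))/\sqrt2$ for $t>0$, and define $\langle\mathscr{A}_\Gamma(u),v\rangle_\Gamma:=\int_{\Gamma\times\Gamma}u(\mathbf{y})v(\mathbf{x})|\mathbf{x}-\mathbf{y}|^{-1/2}\,d\mathbf{x}\,d\mathbf{y}$. For $\alpha\in[0,2\pi)$ let $\mathfrak{K}_\alpha(\tau):=\big(4\sin^2(\alpha)+(\sqrt\tau-1/\sqrt\tau)^2\big)^{-1/4}$, $\tau>0$, and define $\mathscr{A}^\pm_\theta$ by $$\langle\mathscr{A}^\pm_\theta(p),q\rangle_{\mathbb{R}_+}:=\int_{\mathbb{R}_+\times\mathbb{R}_+}\big(\mathfrak{K}_0(t/s)\pm\mathfrak{K}_\theta(t/s)\big)p(s)q(t)(st)^{-1/4}\,ds\,dt.$$ Then for all $p,\tilde p,q,\tilde q\in\mathscr{C}^\infty_0(\mathbb{R}_+)$, $$\langle\mathscr{A}_\Gamma\Theta_\Gamma(p,\tilde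 p),\Theta_\Gamma(q,\tilde q)\rangle_\Gamma=\langle\mathscr{A}^+_\theta(p),q\rangle_{\mathbb{R}_+}+\langle\mathscr{A}^-_\theta(\tilde p),\tilde q\rangle_{\mathbb{R}_+}.$$
   Context: $\mathscr{C}^\infty_0(\mathbb{R}_+)$ denotes the smooth functions on $\mathbb{R}_+=[0,\infty)$ whose support is bounded and contained in $(0,+\infty)$. Integrals over $\Gamma$ are with respect to arc length. *)

From HB Require Import structures.
From mathcomp Require Import all_boot all_order all_algebra.
From mathcomp Require Import all_classical all_reals all_analysis.
Set Implicit Arguments. Unset Strict Implicit. Unset Printing Implicit Defensive.
Import Order.TTheory GRing.Theory Num.Theory.
Local Open Scope classical_set_scope.
Local Open Scope ring_scope.

Section Defs.
Variable R : realType.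

Definition dot2 (x y : R * R) : R := x.1 * y.1 + x.2 * y.2.
Definition edist2 (x y : R * R) : R :=
  Num.sqrt ((x.1 - y.1) ^+ 2 + (x.2 - y.2) ^+ 2).

Definition ray_pt (c e : R * R) (t : R) : R * R := (c.1 + t * e.1, c.2 + t * e.2).

Definition open_ray (c e : R * R) : set (R * R) := [set ray_pt c e t | t in `]0, +oo[].

(* p in C^oo_0(R_+): smooth on (0,+oo) with support bounded and contained in (0,+oo),
   i.e. p vanishes on (0,a) and (b,+oo) for some 0 < a <= b. *)
Definition smooth_cpt (p : R -> R) : Prop :=
  (forall (n : nat) (x : R), 0 < x -> derivable (derive1n n p) x 1) /\
  exists a b : R, 0 < a /\ a <= b /\ forall x : R, 0 < x -> (x < a \/ b < x) -> p x = 0.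

Definition ray_param (c e : R * R) (x : R * R) : R :=
  xget 0 [set t : R | 0 < t /\ x = ray_pt c e t].

Definition ThetaG (c ep em : R * R) (p pt : R -> R) (x : R * R) : R :=
  if pselect (open_ray c ep x) then
    (p (ray_param c ep x) + pt (ray_param c ep x)) / Num.sqrt 2
  else if pselect (open_ray c em x) then
    (p (ray_param c em x) - pt (ray_param c em x)) / Num.sqrt 2
  else 0.

Definition int_pos2 (F : R -> R -> R) : \bar R :=
  (\int[(@lebesgue_measure R) \x (@lebesgue_measure R)]_(z in (`]0, +oo[%classic `*` `]0, +oo[%classic)%R)
     (F z.1 z.2)%:E)%E.

(* Gamma = closure(Gamma_-) u closure(Gamma_+); arc length on Gamma is the sum of
   the push-forwards of Lebesgue measure on (0,+oo) under t |-> c + t e_(+/-)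
   (the common point c is negligible). *)
Definition int_GammaGamma (c ep em : R * R) (G : R * R -> R * R -> R) : \bar R :=
  (int_pos2 (fun s t => G (ray_pt c ep s) (ray_pt c ep t)) +
   int_pos2 (fun s t => G (ray_pt c ep s) (ray_pt c em t)) +
   int_pos2 (fun s t => G (ray_pt c em s) (ray_pt c ep t)) +
   int_pos2 (fun s t => G (ray_pt c em s) (ray_pt c em t)))%E.

Definition AGamma_pair (c ep em : R * R) (u v : R * R -> R) : \bar R :=
  int_GammaGamma c ep em (fun y x => u y * v x * (edist2 x y) `^ (- 2^-1)).

Definition frakK (alpha tau : R) : R :=
  (4 * (sin alpha) ^+ 2 + (Num.sqrt tau - (Num.sqrt tau)^-1) ^+ 2) `^ (- 4^-1).

Definition Atheta_pair (sgn : bool) (theta : R) (p q : R -> R) : \bar R :=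
  int_pos2 (fun s t =>
    (frakK 0 (t / s) + (if sgn then 1 else -1) * frakK theta (t / s))
    * p s * q t * (s * t) `^ (- 4^-1)).

End Defs.

From HB Require Import structures.
From mathcomp Require Import all_boot all_order all_algebra.
From mathcomp Require Import all_classical all_reals all_analysis.
From mathcomp Require Import measurable_realfun.
From mathcomp Require Import ring lra.
Set Implicit Arguments. Unset Strict Implicit. Unset Printing Implicit Defensive.
Import Order.TTheory GRing.Theory Num.Theory.
Import numFieldNormedType.Exports.
Local Open Scope classical_set_scope.
Local Open Scope ring_scope.

(* Parametrize Gamma by arc length t > 0 on each ray.  For two rays at angle 2 al
   (al = 0 for a ray with itself, al = theta for the two different rays) the law of
   cosines gives |x - y|^2 = s^2 + t^2 - 2 s t cos (2 al), whence
   |x - y|^(-1/2) = K_al(t/s) (s t)^(-1/4).  As Theta_Gamma(p, pt) is (p +- pt)/sqrt 2 on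
   Gamma_+-, the four ray-pair integrals combine into one whose integrand is
   K_0 (p q + pt qt) + K_theta (p q - pt qt): the mixed products p qt and pt q cancel.
   Adding the integrals needs integrability of K_al(t/s) (s t)^(-1/4) p(s) q(t): away from
   the diagonal the kernel is bounded, near it it is at most |s - t|^(-1/2) + C, and
   |s - t|^(-1/2) is integrable, as one sees by cutting around s into dyadic annuli. *)

Section rays.
Variable R : realType.
Implicit Types (c e : R * R) (al s t : R).

Lemma cos_double_sin al : cos (2 * al) = 1 - 2 * sin al ^+ 2.
Proof. by rewrite mulr_natl cos_mulr2n cos2sin2 mulr2n; ring. Qed.

Lemma cos_double_lt1 al : 0 < 2 * al < 2 * pi -> cos (2 * al) < 1.
Proof.
move=> /andP[al0 alpi]; rewrite cos_double_sin ltrBlDr ltrDl.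
have : 0 < sin al by apply: sin_gt0_pi; apply/andP; split; lra.
by move=> sin_gt0; rewrite mulr_gt0 // exprn_gt0.
Qed.

Lemma sqr_dist_ray_pt c (e1 e2 : R * R) s t : dot2 e1 e1 = 1 -> dot2 e2 e2 = 1 ->
  ((ray_pt c e2 t).1 - (ray_pt c e1 s).1) ^+ 2 +
  ((ray_pt c e2 t).2 - (ray_pt c e1 s).2) ^+ 2 =
  s ^+ 2 + t ^+ 2 - 2 * s * t * dot2 e1 e2.
Proof.
move=> h1 h2; rewrite -[s ^+ 2]mulr1 -[t ^+ 2]mulr1 -[in s ^+ 2 * 1]h1 -[in t ^+ 2 * 1]h2.
by rewrite /dot2 /=; ring.
Qed.

Lemma ray_pt_inj c e : dot2 e e = 1 -> injective (ray_pt c e).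
Proof.
move=> he s t est; have := sqr_dist_ray_pt c s t he he.
rewrite est !subrr expr0n /= addr0 he mulr1.
have -> : s ^+ 2 + t ^+ 2 - 2 * s * t = (s - t) ^+ 2 by ring.
by move/esym/eqP; rewrite sqrf_eq0 subr_eq0 => /eqP.
Qed.

Lemma ray_param_ray_pt c e t : dot2 e e = 1 -> 0 < t -> ray_param c e (ray_pt c e t) = t.
Proof.
move=> he t0; apply: xget_unique; first by split.
by move=> y [_ /(ray_pt_inj he)].
Qed.

Lemma open_ray_pt c e t : 0 < t -> open_ray c e (ray_pt c e t).
Proof. by move=> t0; exists t => //=; rewrite in_itv /= t0. Qed.

Lemma ray_pt_neq c (ep em : R * R) s t : dot2 ep ep = 1 -> dot2 em em = 1 ->
  dot2 ep em < 1 -> 0 < s -> 0 < t -> ray_pt c ep s <> ray_pt c em t.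
Proof.
move=> hp hm hpm s0 t0 est; have := sqr_dist_ray_pt c s t hp hm.
rewrite est !subrr expr0n /= addr0.
have : 0 < s * t * (1 - dot2 ep em) by rewrite !mulr_gt0 // subr_gt0.
have := sqr_ge0 (s - t); nra.
Qed.

Section ThetaG_on_rays.
Variables (c ep em : R * R) (p pt : R -> R) (t : R).
Hypotheses (hp : dot2 ep ep = 1) (hm : dot2 em em = 1) (hpm : dot2 ep em < 1) (t0 : 0 < t).

Lemma ThetaG_ray_pt_plus : ThetaG c ep em p pt (ray_pt c ep t) = (p t + pt t) / Num.sqrt 2.
Proof.
rewrite /ThetaG; case: pselect => [?|/(_ (open_ray_pt c ep t0))] //.
by rewrite ray_param_ray_pt.
Qed.

Lemma ThetaG_ray_pt_minus : ThetaG c ep em p pt (ray_pt c em t) = (p t - pt t) / Num.sqrt 2.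
Proof.
rewrite /ThetaG; case: pselect => [[s s0 est]|?] /=.
  by move: s0; rewrite /= in_itv /= andbT => s0; case: (ray_pt_neq hp hm hpm s0 t0 est).
case: pselect => [?|/(_ (open_ray_pt c em t0))] //.
by rewrite ray_param_ray_pt.
Qed.

End ThetaG_on_rays.

Definition ray_kernel al s t : R :=
  (s ^+ 2 + t ^+ 2 - 2 * s * t * cos (2 * al)) `^ (- 4^-1).

Lemma edist2_ray_pt_powR c (e1 e2 : R * R) al s t :
  dot2 e1 e1 = 1 -> dot2 e2 e2 = 1 -> dot2 e1 e2 = cos (2 * al) ->
  edist2 (ray_pt c e2 t) (ray_pt c e1 s) `^ (- 2^-1) = ray_kernel al s t.
Proof.
move=> h1 h2 h12; rewrite /edist2 -powR12_sqrt ?addr_ge0 ?sqr_ge0 //.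
by rewrite -powRrM sqr_dist_ray_pt // h12 /ray_kernel; congr (_ `^ _); field.
Qed.

Lemma ray_kernel_frakK al s t : 0 < s -> 0 < t ->
  ray_kernel al s t = frakK al (t / s) * (s * t) `^ (- 4^-1).
Proof.
move=> s0 t0; have ts0 : 0 < t / s by rewrite divr_gt0.
rewrite /frakK /ray_kernel -powRM; last 2 first.
- by rewrite addr_ge0 // ?sqr_ge0 // mulr_ge0 // sqr_ge0.
- by rewrite mulr_ge0 // ltW.
congr (_ `^ _); set S := Num.sqrt (t / s).
have S0 : 0 < S by rewrite sqrtr_gt0.
have S2 : S ^+ 2 = t / s by rewrite sqr_sqrtr // ltW.
have -> : (S - S^-1) ^+ 2 = S ^+ 2 - 2 + (S ^+ 2)^-1 by field; rewrite gt_eqF.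
by rewrite S2 cos_double_sin; field; rewrite !gt_eqF.
Qed.

End rays.

Section singular_integral.
Variable R : realType.

Lemma gt0_ler_powRN (x y r : R) : 0 < x -> x <= y -> 0 <= r -> y `^ (- r) <= x `^ (- r).
Proof.
move=> x0 xy r0; rewrite !powRN lef_pV2 ?posrE ?powR_gt0 //; last exact: lt_le_trans xy.
by apply: ge0_ler_powR => //; rewrite nnegrE ltW // (lt_le_trans x0).
Qed.

Lemma powRN_addr_le (x y r : R) : 0 <= x -> 0 <= y -> 0 <= r ->
  (x + y) `^ (- r) <= x `^ (- r) + y `^ (- r).
Proof.
move=> x0 y0 r0; have [->|xn0] := eqVneq x 0; first by rewrite add0r lerDr powR_ge0.
have x_gt0 : 0 < x by rewrite lt0r xn0.
apply: le_trans (gt0_ler_powRN x_gt0 _ r0) _; first by rewrite lerDl.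
by rewrite lerDl powR_ge0.
Qed.

Lemma powR_expr4N (x : R) : 0 < x -> (x ^+ 4) `^ (- 4^-1) = x^-1.
Proof. by move=> x0; rewrite -powR_mulrn ?ltW // -powRrM mulrN mulfV // powR_inv1 // ltW. Qed.

Lemma measurable_powR_sqr_dist (s r : R) :
  measurable_fun setT (fun t : R => ((t - s) ^+ 2) `^ r).
Proof.
apply: (measurableT_comp (measurable_powR _)).
by apply: measurable_funX; apply: measurable_funB.
Qed.

(* On the k-th annulus |t - s|^(-1/2) <= 2^(k+1)/c and the measure is at most 2 c^2/4^k,
   so the k-th piece contributes at most 8 c/2^(k+1). *)
Section annuli.
Variables (s c : R).
Hypothesis c0 : 0 < c.

Let h t := ((t - s) ^+ 2) `^ (- 4^-1).
Let rad k := c / 2 ^+ k.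
Let annulus k := [set t | rad k.+1 ^+ 2 < `|t - s| <= rad k ^+ 2].

Let rad_gt0 k : 0 < rad k. Proof. by rewrite divr_gt0 // exprn_gt0. Qed.

Let sqr_rad_nonincr i j : (i <= j)%N -> rad j ^+ 2 <= rad i ^+ 2.
Proof.
move=> ij; rewrite lerXn2r ?nnegrE ?(ltW (rad_gt0 _)) // /rad ler_pM2l //.
by rewrite lef_pV2 ?posrE ?exprn_gt0 // ler_eXn2l // ltr1n.
Qed.

Let measurable_annulus k : measurable (annulus k).
Proof.
have -> : annulus k = (fun t => `|t - s|) @^-1` `]rad k.+1 ^+ 2, rad k ^+ 2].
  by apply/seteqP; split => t /=; rewrite in_itv.
rewrite -[X in measurable X]setTI; apply: measurableT_comp => //.
exact: measurable_funB.
Qed.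

Let trivIset_annulus : trivIset setT annulus.
Proof.
apply: ltn_trivIset => i j ij; apply/seteqP; split => // t [/andP[ti _] /andP[_ tj]].
have := le_lt_trans (le_trans tj (sqr_rad_nonincr ij)) ti.
by rewrite ltxx.
Qed.

Let bigcup_annulus : \bigcup_k annulus k = `[s - c ^+ 2, s + c ^+ 2] `\ s.
Proof.
apply/seteqP; split => t.
  move=> [k _ /andP[tk1 tk]]; split.
    rewrite /= in_itv /= -ler_distl (le_trans tk) //.
    by have := sqr_rad_nonincr (leq0n k); rewrite /rad expr0 divr1.
  by move=> /= ts; move: tk1; rewrite ts subrr normr0 ltNge sqr_ge0.
rewrite /= in_itv /= -ler_distl => -[tI /eqP ts].
have dist_gt0 : 0 < `|t - s| by rewrite normr_gt0 subr_eq0.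
have rad_lt : exists n, rad n ^+ 2 < `|t - s|.
  exists (Num.Def.archi_bound (c ^+ 2 / `|t - s|)); rewrite /rad expr_div_n -exprM.
  rewrite ltr_pdivrMr ?exprn_gt0 // -ltr_pdivrMl // mulrC.
  apply: lt_trans (archi_boundP _) _; first by rewrite divr_ge0 ?sqr_ge0.
  rewrite -natrX ltr_nat (leq_trans (ltn_expl _ (ltnSn 1))) //.
  by rewrite leq_pexp2l // leq_pmulr.
case: (ex_minnP rad_lt) => -[|k] tk1 k_min.
  by move: tk1; rewrite /rad expr0 divr1 ltNge tI.
exists k => //; rewrite /annulus /= tk1 /= leNgt.
by apply/negP => /k_min; rewrite ltnn.
Qed.

Let measure_annulus_le k : (lebesgue_measure (annulus k) <= (2 * rad k ^+ 2)%:E)%E.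
Proof.
apply: (@le_trans _ _ (lebesgue_measure [set` `[s - rad k ^+ 2, s + rad k ^+ 2]])).
  apply: le_measure; rewrite ?inE; [exact: measurable_annulus|exact: measurable_itv|].
  by move=> t /andP[_]; rewrite /= in_itv /= -ler_distl.
rewrite lebesgue_measure_itv /= lte_fin ltrD2l gtrN ?exprn_gt0 // -EFinD lee_fin; lra.
Qed.

Let h_le_annulus k t : annulus k t -> h t <= (rad k.+1)^-1.
Proof.
move=> /andP[tk1 _]; rewrite /h -(powR_expr4N (rad_gt0 k.+1)).
apply: gt0_ler_powRN; rewrite ?invr_ge0 ?exprn_gt0 //.
rewrite -real_normK ?num_real // (_ : 4 = 2 * 2)%N // exprM.
by rewrite lerXn2r ?nnegrE ?normr_ge0 ?sqr_ge0 // ltW.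
Qed.

Let integral_annulus_le k :
  (\int[lebesgue_measure]_(t in annulus k) (h t)%:E <= (8 * c / (2 ^ k.+1)%:R)%:E)%E.
Proof.
apply: (@le_trans _ _ (\int[lebesgue_measure]_(t in annulus k) (cst ((rad k.+1)^-1)%:E) t)%E).
  apply: ge0_le_integral => //; first exact: measurable_annulus.
  - by move=> t _; rewrite lee_fin powR_ge0.
  - by apply/measurable_EFinP; apply: measurable_funS (measurable_powR_sqr_dist s _).
  - by move=> t /h_le_annulus; rewrite lee_fin.
rewrite integral_cst /=; last exact: measurable_annulus.
apply: le_trans (lee_wpmul2l _ (measure_annulus_le k)) _; first by rewrite lee_fin invr_ge0 ltW.
rewrite -EFinM lee_fin /rad natrX le_eqVlt; apply/orP; left; apply/eqP.
have pow2_neq0 : (2 : R) ^+ k != 0 by rewrite expf_neq0.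
by rewrite exprS; field; rewrite pow2_neq0 gt_eqF.
Qed.

Lemma integral_powR_sqr_dist_le :
  (\int[lebesgue_measure]_(t in `[(s - c ^+ 2)%R, (s + c ^+ 2)%R])
     (((t - s) ^+ 2) `^ (- 4^-1))%R%:E <= (8 * c)%:E)%E.
Proof.
have mh D : measurable_fun D (fun t => (h t)%:E).
  by apply/measurable_EFinP; apply: measurable_funS (measurable_powR_sqr_dist s _).
rewrite -(integral_setD1 (r := s)) //; last exact: measurableD.
rewrite -bigcup_annulus ge0_integral_bigcup //; last 2 first.
- exact: mh.
- by move=> t _; rewrite lee_fin powR_ge0.
apply: le_trans (epsilon_trick0 xpredT _); last by rewrite mulr_ge0 // ltW.
apply: lee_nneseries => k _; last exact: integral_annulus_le.
by move=> _; apply: integral_ge0 => t _; rewrite lee_fin powR_ge0.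
Qed.

End annuli.
End singular_integral.

Section kernel_integrability.
Variable R : realType.
Implicit Types (al A B s t : R).

(* On the diagonal s = t the first summand is the junk value 0 `^ (-1/4) = 0; the bound
   is then carried by the second one. *)
Lemma ray_kernel_le al A s t : 0 < A -> A <= s -> A <= t ->
  ray_kernel al s t <=
  ((t - s) ^+ 2) `^ (- 4^-1) + (2 * A ^+ 2 * (1 - cos (2 * al))) `^ (- 4^-1).
Proof.
move=> A0 As At; set k := 1 - cos (2 * al).
have k0 : 0 <= k by rewrite subr_ge0 cos_le1.
have r0 : 0 <= 4^-1 :> R by rewrite invr_ge0.
rewrite /ray_kernel (_ : _ - _ = (t - s) ^+ 2 + 2 * s * t * k); last by rewrite /k; ring.
have st0 : 0 <= 2 * s * t * k by rewrite !mulr_ge0 // (le_trans (ltW A0)).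
apply: le_trans (powRN_addr_le (sqr_ge0 _) st0 r0) _; rewrite lerD2l.
have [->|k_neq0] := eqVneq k 0; first by rewrite !mulr0.
apply: gt0_ler_powRN r0; first by rewrite !mulr_gt0 ?exprn_gt0 // lt0r k_neq0.
by rewrite ler_wpM2r // expr2 mulrA ler_pM ?mulr_ge0 ?ler_wpM2l // ltW.
Qed.

Lemma measurable_ray_kernel al :
  measurable_fun setT (fun z : R * R => ray_kernel al z.1 z.2).
Proof.
apply: (measurableT_comp (measurable_powR _)).
apply: measurable_funB; first by apply: measurable_funD; apply: measurable_funX.
apply: measurable_funM => //; apply: measurable_funM => //.
exact: measurable_funM.
Qed.

Lemma integral_ray_kernel_row_le al A B : 0 < A -> exists K : R, forall s, A <= s <= B ->
  (\int[lebesgue_measure]_(t in `[A, B]) (ray_kernel al s t)%:E <= K%:E)%E.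
Proof.
move=> A0; pose c := `|B - A| + 1.
pose C := (2 * A ^+ 2 * (1 - cos (2 * al))) `^ (- 4^-1).
exists (8 * c + C * (2 * c ^+ 2)) => s /andP[As sB].
pose J := `[s - c ^+ 2, s + c ^+ 2].
have c1 : 1 <= c by rewrite lerDr.
have AB_J : [set` `[A, B]] `<=` [set` J].
  move=> t; rewrite /= !in_itv /= => /andP[At tB].
  have : `|B - A| <= c ^+ 2 by rewrite (le_trans _ (ler_eXnr _ c1)) // lerDl.
  rewrite ger0_norm ?subr_ge0 ?(le_trans As) // => BA; apply/andP; split; lra.
have C0 : 0 <= C by rewrite powR_ge0.
have h0 t : (0 <= (((t - s) ^+ 2) `^ (- 4^-1) + C)%:E)%E by rewrite lee_fin addr_ge0 ?powR_ge0.
have mh D : measurable_fun D (fun t => (((t - s) ^+ 2) `^ (- 4^-1) + C)%:E).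
  apply/measurable_EFinP; apply: measurable_funD => //.
  exact: measurable_funS (measurable_powR_sqr_dist s _).
apply: (@le_trans _ _
  (\int[lebesgue_measure]_(t in `[A, B]) (((t - s) ^+ 2) `^ (- 4^-1) + C)%:E)%E).
  apply: ge0_le_integral => //.
  - by move=> t _; rewrite lee_fin powR_ge0.
  - apply/measurable_EFinP.
    exact: measurable_funS (measurable_fun_pair2 s (measurable_ray_kernel al)).
  - exact: mh.
  - move=> t /=; rewrite in_itv /= => /andP[At _]; rewrite lee_fin.
    exact: ray_kernel_le (le_trans _ As) At.
apply: (le_trans (ge0_subset_integral lebesgue_measure (measurable_itv _) (measurable_itv _) (mh _)
  (fun t _ => h0 t) AB_J)).
under eq_integral do rewrite EFinD.
rewrite ge0_integralD //; last 2 first.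
- by move=> t _; rewrite lee_fin powR_ge0.
- by apply/measurable_EFinP; exact: measurable_funS (measurable_powR_sqr_dist s _).
rewrite integral_cst //= lebesgue_measure_itv /= lte_fin ltrD2l gtrN ?exprn_gt0 //; last by lra.
rewrite -EFinD -EFinM EFinD leeD //; first exact: integral_powR_sqr_dist_le (lt_le_trans ltr01 c1).
by rewrite lee_fin ler_wpM2l //; lra.
Qed.

End kernel_integrability.

Section bounded_cpt.
Variable R : realType.
Implicit Types (A B M k : R) (a b : R -> R).

Definition bounded_supp A B M a : Prop :=
  forall x, 0 < x -> `|a x| <= M /\ (~~ (A <= x <= B) -> a x = 0).

Definition bounded_cpt a : Prop :=
  measurable_fun (`]0, +oo[ : set R) a /\ exists A B M, 0 < A /\ bounded_supp A B M a.

Lemma bounded_supp_widen A B M A' B' M' a : A' <= A -> B <= B' -> M <= M' ->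
  bounded_supp A B M a -> bounded_supp A' B' M' a.
Proof.
move=> A'A BB' MM' ha x x0; have [aM a0] := ha x x0; split; first exact: le_trans MM'.
move=> xI; apply: a0; apply: contra xI => /andP[Ax xB].
by rewrite (le_trans A'A) ?(le_trans xB).
Qed.

Lemma bounded_cpt_common a b : bounded_cpt a -> bounded_cpt b ->
  exists A B M, 0 < A /\ bounded_supp A B M a /\ bounded_supp A B M b.
Proof.
move=> [_ [Aa [Ba [Ma [Aa0 ha]]]]] [_ [Ab [Bb [Mb [Ab0 hb]]]]].
exists (Num.min Aa Ab), (Num.max Ba Bb), (Num.max Ma Mb); split; first by rewrite lt_min Aa0.
by split; [apply: bounded_supp_widen ha|apply: bounded_supp_widen hb];
  rewrite ?ge_min ?le_max ?lexx ?orbT.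
Qed.

Lemma bounded_cptD a b : bounded_cpt a -> bounded_cpt b -> bounded_cpt (fun x => a x + b x).
Proof.
move=> ha hb; split; first by apply: measurable_funD; [case: ha|case: hb].
have [A [B [M [A0 [hAa hAb]]]]] := bounded_cpt_common ha hb.
exists A, B, (M + M); split => // x x0.
have [aM a0] := hAa x x0; have [bM b0] := hAb x x0; split.
  by rewrite (le_trans (ler_normD _ _)) // lerD.
by move=> xI; rewrite a0 ?b0 // addr0.
Qed.

Lemma bounded_cptMr k a : bounded_cpt a -> bounded_cpt (fun x => a x * k).
Proof.
move=> [ma [A [B [M [A0 ha]]]]]; split; first exact: measurable_funM.
exists A, B, (M * `|k|); split => // x x0; have [aM a0] := ha x x0; split.
  by rewrite normrM ler_wpM2r.
by move=> xI; rewrite a0 // mul0r.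
Qed.

Lemma bounded_cptN a : bounded_cpt a -> bounded_cpt (fun x => - a x).
Proof.
move=> [ma [A [B [M [A0 ha]]]]]; split; first exact: measurable_funN.
exists A, B, M; split => // x x0; have [aM a0] := ha x x0; split; first by rewrite normrN.
by move=> xI; rewrite a0 // oppr0.
Qed.

Lemma smooth_cpt_bounded_cpt a : smooth_cpt a -> bounded_cpt a.
Proof.
move=> [hd [A [B [A0 [AB za]]]]].
have ca x : 0 < x -> {for x, continuous a}.
  move=> x0; apply: differentiable_continuous; apply/derivable1_diffP.
  exact: (hd 0%N x x0).
split.
  apply: open_continuous_measurable_fun; first exact: rray_open.
  by move=> x; rewrite inE /= in_itv /= andbT => /ca.
have : {within `[A, B], continuous (fun x => `|a x|)}.
  apply: continuous_in_subspaceT => x; rewrite inE /= in_itv /= => /andP[Ax _].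
  exact: continuous_comp (ca _ (lt_le_trans A0 Ax)) (@norm_continuous _ _ _).
move=> /(EVT_max AB) [m _ am]; exists A, B, `|a m|; split => // x x0.
have [/andP[Ax xB]|xI] := boolP (A <= x <= B).
  by split => //; apply: am; rewrite in_itv /= Ax xB.
have ax0 : a x = 0 by apply: za => //; move: xI; rewrite negb_and -!ltNge => /orP.
by rewrite ax0 normr0.
Qed.

End bounded_cpt.

Section integrability.
Variable R : realType.

Definition integrable_pos2 (F : R -> R -> R) : Prop :=
  ((@lebesgue_measure R) \x (@lebesgue_measure R))%E.-integrable
    (`]0, +oo[%classic `*` `]0, +oo[%classic) (fun z => (F z.1 z.2)%:E).

Let measurable_pos2 : measurable (`]0, +oo[%classic `*` `]0, +oo[%classic :
  set (measurableTypeR R * measurableTypeR R)).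
Proof. by apply: measurableX; exact: measurable_itv. Qed.

Section kernel_times_bounded.
Variables (al A B M : R) (a b : R -> R).
Hypotheses (A0 : 0 < A)
  (ma : measurable_fun (`]0, +oo[ : set R) a) (mb : measurable_fun (`]0, +oo[ : set R) b)
  (ha : bounded_supp A B M a) (hb : bounded_supp A B M b).

Let a' := a \_ `]0, +oo[.
Let b' := b \_ `]0, +oo[.
Let F (z : R * R) := ray_kernel al z.1 z.2 * a' z.1 * b' z.2.

Let bounded_supp_restrict f : bounded_supp A B M f ->
  forall x, `|(f \_ `]0, +oo[) x| <= M /\ (~~ (A <= x <= B) -> (f \_ `]0, +oo[) x = 0).
Proof.
move=> hf x; rewrite /patch; case: ifPn => [|_]; last first.
  by split => //; rewrite normr0 (le_trans _ (proj1 (hf _ A0))).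
by rewrite inE /= in_itv /= andbT => /hf.
Qed.

Let a'_supp : forall x, `|a' x| <= M /\ (~~ (A <= x <= B) -> a' x = 0).
Proof. exact: bounded_supp_restrict. Qed.

Let b'_supp : forall y, `|b' y| <= M /\ (~~ (A <= y <= B) -> b' y = 0).
Proof. exact: bounded_supp_restrict. Qed.

Let measurable_F : measurable_fun setT F.
Proof.
apply: measurable_funM; last first.
  exact: measurableT_comp ((measurable_restrictT _ (measurable_itv _)).1 mb) measurable_snd.
apply: measurable_funM; first exact: measurable_ray_kernel.
exact: measurableT_comp ((measurable_restrictT _ (measurable_itv _)).1 ma) measurable_fst.
Qed.

Let M_ge0 : 0 <= M.
Proof. exact: le_trans (normr_ge0 _) (proj1 (ha A0)). Qed.

Let integral_F_row_le K :
  (forall x, A <= x <= B ->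
    (\int[lebesgue_measure]_(y in `[A, B]) (ray_kernel al x y)%:E <= K%:E)%E) ->
  forall x, A <= x <= B ->
  (\int[lebesgue_measure]_y `|(F (x, y))%:E| <= (M * M * K)%:E)%E.
Proof.
move=> hK x xI.
have mK : measurable_fun setT (fun y => (M * M * ray_kernel al x y)%:E).
  apply/measurable_EFinP; apply: measurable_funM => //.
  exact: measurable_fun_pair2 x (measurable_ray_kernel al).
apply: (@le_trans _ _ (\int[lebesgue_measure]_y
    ((fun y => (M * M * ray_kernel al x y)%:E) \_ `[A, B]%classic) y)%E).
  apply: ge0_le_integral => //.
  - apply: measurableT_comp => //; apply/measurable_EFinP.
    exact: measurable_fun_pair2 x measurable_F.
  - exact: (measurable_restrictT _ (measurable_itv _)).1 (measurable_funS _ _ mK).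
  - move=> y _; have [yI|yI] := boolP (A <= y <= B).
      rewrite patchT ?inE /= ?in_itv //= lee_fin /F /= !normrM ger0_norm ?powR_ge0 //.
      rewrite -mulrA [M * M * _]mulrC ler_wpM2l ?powR_ge0 //.
      by rewrite ler_pM ?normr_ge0 //; [exact: (proj1 (a'_supp x))|exact: (proj1 (b'_supp y))].
    rewrite /F /= (proj2 (b'_supp y)) // mulr0 normr0; apply: erestrict_ge0 => z _.
    by rewrite lee_fin !mulr_ge0 ?powR_ge0.
rewrite -integral_mkcond; under eq_integral do rewrite EFinM.
rewrite ge0_integralZl_EFin ?mulr_ge0 //.
- by rewrite (EFinM (M * M)); apply: lee_wpmul2l; rewrite ?lee_fin ?mulr_ge0 // hK.
- by move=> y _; rewrite lee_fin powR_ge0.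
- apply/measurable_EFinP.
  exact: measurable_funS (measurable_fun_pair2 x (measurable_ray_kernel al)).
Qed.

Lemma integrable_ray_kernel_supp :
  integrable_pos2 (fun s t => ray_kernel al s t * a s * b t).
Proof.
rewrite /integrable_pos2; have [K hK] := integral_ray_kernel_row_le al B A0.
have eqF : {in `]0, +oo[%classic `*` `]0, +oo[%classic, EFin \o F =1
    (fun z => (ray_kernel al z.1 z.2 * a z.1 * b z.2)%:E)}.
  move=> [x y]; rewrite inE => -[/= x0 y0].
  by rewrite /F /a' /b' /patch /= !mem_set.
suff : ((@lebesgue_measure R) \x (@lebesgue_measure R))%E.-integrable
  (`]0, +oo[%classic `*` `]0, +oo[%classic) (EFin \o F).
  exact: eq_integrable measurable_pos2 _ _ eqF.
apply: (integrableS measurableT) => //.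
have mF : measurable_fun [set: measurableTypeR R * measurableTypeR R] (EFin \o F).
  exact/measurable_EFinP.
apply/(integrable12ltyP _ _ mF).
apply: (@le_lt_trans _ _
  (\int[lebesgue_measure]_x ((cst (M * M * K)%:E) \_ `[A, B]%classic) x)%E).
  apply: ge0_le_integral => //.
  - by move=> x _; apply: integral_ge0 => y _; exact: abse_ge0.
  - have mabsF := measurableT_comp (@abse_measurable R setT) mF.
    exact: (@measurable_fun_fubini_tonelli_F _ _ _ _ R lebesgue_measure _ mabsF
      (fun _ => abse_ge0 _)).
  - exact: (measurable_restrictT _ (measurable_itv _)).1 (measurable_cst _).
  - move=> x _; have [xI|xI] := boolP (A <= x <= B).
      rewrite patchT /=; first exact: integral_F_row_le.
      by rewrite inE /= in_itv.
    rewrite patchC; last by rewrite inE /= in_itv /=; apply/negP.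
    under eq_integral do rewrite /F /= (proj2 (a'_supp x)) // mulr0 mul0r normr0.
    by rewrite integral0.
rewrite -integral_mkcond integral_cst //= lebesgue_measure_itv /=.
by case: ifP => _; rewrite -?EFinM ?mule0 ltry.
Qed.

End kernel_times_bounded.

Lemma integrable_ray_kernel al a b : bounded_cpt a -> bounded_cpt b ->
  integrable_pos2 (fun s t => ray_kernel al s t * a s * b t).
Proof.
move=> ha hb; have [A [B [M [A0 [hAa hAb]]]]] := bounded_cpt_common ha hb.
exact: integrable_ray_kernel_supp A0 (proj1 ha) (proj1 hb) hAa hAb.
Qed.

Lemma integrable_pos2D (F G : R -> R -> R) : integrable_pos2 F -> integrable_pos2 G ->
  integrable_pos2 (fun s t => F s t + G s t).
Proof.
move=> iF iG; apply: eq_integrable measurable_pos2 _ _ _ (integrableD measurable_pos2 iF iG).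
by move=> z _; rewrite /= EFinD.
Qed.

Lemma integrable_pos2Z (k : R) (F : R -> R -> R) : integrable_pos2 F ->
  integrable_pos2 (fun s t => k * F s t).
Proof.
move=> iF; apply: eq_integrable measurable_pos2 _ _ _ (integrableZl measurable_pos2 k iF).
by move=> z _; rewrite /= EFinM.
Qed.

Lemma int_pos2D (F G : R -> R -> R) : integrable_pos2 F -> integrable_pos2 G ->
  (int_pos2 F + int_pos2 G)%E = int_pos2 (fun s t => F s t + G s t).
Proof. by move=> iF iG; rewrite /int_pos2 -integralD. Qed.

Lemma eq_int_pos2 (F G : R -> R -> R) : (forall s t, 0 < s -> 0 < t -> F s t = G s t) ->
  int_pos2 F = int_pos2 G.
Proof.
move=> FG; apply: eq_integral => -[s t]; rewrite inE /= !in_itv /= !andbT => -[s0 t0].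
by rewrite FG.
Qed.

End integrability.

Section pairings.
Variable R : realType.
Implicit Types (p pt q qt : R -> R).

Lemma Atheta_pair_ray_kernel (sgn : bool) (theta : R) p q :
  Atheta_pair sgn theta p q = int_pos2 (fun s t =>
    ray_kernel 0 s t * p s * q t + (if sgn then 1 else -1) * (ray_kernel theta s t * p s * q t)).
Proof.
apply: eq_int_pos2 => s t s0 t0; rewrite !ray_kernel_frakK //; ring.
Qed.

Lemma int_pos2_rays (c e1 e2 : R * R) (al : R) (u v : R * R -> R) (f g : R -> R) :
  dot2 e1 e1 = 1 -> dot2 e2 e2 = 1 -> dot2 e1 e2 = cos (2 * al) ->
  (forall s, 0 < s -> u (ray_pt c e1 s) = f s) -> (forall t, 0 < t -> v (ray_pt c e2 t) = g t) ->
  int_pos2 (fun s t => u (ray_pt c e1 s) * v (ray_pt c e2 t) *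
    edist2 (ray_pt c e2 t) (ray_pt c e1 s) `^ (- 2^-1)) =
  int_pos2 (fun s t => ray_kernel al s t * f s * g t).
Proof.
move=> h1 h2 h12 uf vg; apply: eq_int_pos2 => s t s0 t0.
by rewrite uf // vg // (edist2_ray_pt_powR _ _ _ h1 h2 h12) mulrC mulrA.
Qed.

Lemma AGamma_pair_ThetaG (c ep em : R * R) (theta : R) p pt q qt :
  dot2 ep ep = 1 -> dot2 em em = 1 -> dot2 ep em = cos (2 * theta) -> cos (2 * theta) < 1 ->
  bounded_cpt p -> bounded_cpt pt -> bounded_cpt q -> bounded_cpt qt ->
  AGamma_pair c ep em (ThetaG c ep em p pt) (ThetaG c ep em q qt) =
  int_pos2 (fun s t =>
    ray_kernel 0 s t * ((p s + pt s) / Num.sqrt 2) * ((q t + qt t) / Num.sqrt 2) +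
    ray_kernel theta s t * ((p s + pt s) / Num.sqrt 2) * ((q t - qt t) / Num.sqrt 2) +
    ray_kernel theta s t * ((p s - pt s) / Num.sqrt 2) * ((q t + qt t) / Num.sqrt 2) +
    ray_kernel 0 s t * ((p s - pt s) / Num.sqrt 2) * ((q t - qt t) / Num.sqrt 2)).
Proof.
move=> hp hm hpm hcos bp bpt bq bqt.
have hpm1 : dot2 ep em < 1 by rewrite hpm.
have hmp : dot2 em ep = cos (2 * theta) by rewrite -hpm /dot2 mulrC [em.2 * _]mulrC.
have unit0 (e : R * R) : dot2 e e = 1 -> dot2 e e = cos (2 * 0) by rewrite mulr0 cos0.
have bu : bounded_cpt (fun s => (p s + pt s) / Num.sqrt 2) by apply/bounded_cptMr/bounded_cptD.
have bu' : bounded_cpt (fun s => (p s - pt s) / Num.sqrt 2).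
  by apply/bounded_cptMr/bounded_cptD/bounded_cptN.
have bv : bounded_cpt (fun t => (q t + qt t) / Num.sqrt 2) by apply/bounded_cptMr/bounded_cptD.
have bv' : bounded_cpt (fun t => (q t - qt t) / Num.sqrt 2).
  by apply/bounded_cptMr/bounded_cptD/bounded_cptN.
have Tp f f' t : 0 < t -> ThetaG c ep em f f' (ray_pt c ep t) = (f t + f' t) / Num.sqrt 2.
  exact: ThetaG_ray_pt_plus.
have Tm f f' t : 0 < t -> ThetaG c ep em f f' (ray_pt c em t) = (f t - f' t) / Num.sqrt 2.
  exact: ThetaG_ray_pt_minus.
rewrite /AGamma_pair /int_GammaGamma.
rewrite (int_pos2_rays hp hp (unit0 _ hp) (Tp p pt) (Tp q qt)).
rewrite (int_pos2_rays hp hm hpm (Tp p pt) (Tm q qt)).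
rewrite (int_pos2_rays hm hp hmp (Tm p pt) (Tp q qt)).
rewrite (int_pos2_rays hm hm (unit0 _ hm) (Tm p pt) (Tm q qt)).
by rewrite !int_pos2D //; repeat apply: integrable_pos2D; apply: integrable_ray_kernel.
Qed.

End pairings.

Theorem lemma1 (R : realType) (c ep em : R * R) (theta : R)
  (hep : dot2 ep ep = 1) (hem : dot2 em em = 1)
  (hcos : dot2 ep em = cos (2 * theta))
  (htheta : 0 < 2 * theta < 2 * pi)
  (p pt q qt : R -> R)
  (hp : smooth_cpt p) (hpt : smooth_cpt pt) (hq : smooth_cpt q) (hqt : smooth_cpt qt) :
  AGamma_pair c ep em (ThetaG c ep em p pt) (ThetaG c ep em q qt) =
  (Atheta_pair true theta p q + Atheta_pair false theta pt qt)%E.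
Proof.
have bp := smooth_cpt_bounded_cpt hp; have bpt := smooth_cpt_bounded_cpt hpt.
have bq := smooth_cpt_bounded_cpt hq; have bqt := smooth_cpt_bounded_cpt hqt.
rewrite (AGamma_pair_ThetaG c hep hem hcos) ?cos_double_lt1 //.
rewrite !Atheta_pair_ray_kernel int_pos2D; last 2 first.
1, 2: by apply: integrable_pos2D; last apply: integrable_pos2Z; exact: integrable_ray_kernel.
apply: eq_int_pos2 => s t _ _.
have sqrt2_neq0 : Num.sqrt 2 != 0 :> R by rewrite sqrtr_eq0 -ltNge ltr0n.
have div_sqrt2 x y z : x * (y / Num.sqrt 2) * (z / Num.sqrt 2) = x * y * z / 2 :> R.
  by rewrite -[in RHS](sqr_sqrtr (ler0n R 2)); field.
by rewrite !div_sqrt2; field.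
Qed.
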